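(* Let $\{a_n\}_{n\ge1}$, $\{b_n\}_{n\ge1}$ and $\{\tilde a_n\}_{n\ge1}$ be three non-negative real sequences such that $\sum_{n=1}^\infty a_n=\infty$, $\sum_{n=1}^\infty a_n b_n^p<\infty$, $\lim_{n\to\infty} a_n/\tilde a_n=1$, and $|b_{n+1}-b_n|\le C\,\tilde a_n\, b_n^{p-\epsilon}$ for all $n$, for some positive constants $C$, $p$ and some $\epsilon\in[0,p]$. Then $\lim_{n\to\infty} b_n=0$.
   Context: Here $b_n^{0}$ is interpreted as $1$ (relevant when $\epsilon=p$). *)

From HB Require Import structures.
From mathcomp Require Import all_boot all_order all_algebra.
From mathcomp Require Import all_classical all_reals all_analysis.
Set Implicit Arguments.
Unset Strict Implicit.
Unset Printing Implicit Defensive.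

From mathcomp Require Import ring lra.
From HB Require Import structures.
From mathcomp Require Import all_boot all_order all_algebra.
From mathcomp Require Import all_classical all_reals all_analysis.
Set Implicit Arguments.
Unset Strict Implicit.
Unset Printing Implicit Defensive.
Import Order.TTheory GRing.Theory Num.Theory.
Import numFieldNormedType.Exports.
Local Open Scope ring_scope.
Local Open Scope classical_set_scope.

(* Write u_n := a_n b_n^p, a summable series.  If b_n <= d for only finitely
   many n, then eventually u_n >= d^p a_n, contradicting sum a_n = oo; so b
   keeps coming back below every level d > 0.  While b stays above d, the step
   hypothesis, at_n <= 2 a_n (eventually) and b^(p-eps) d^eps <= b^p give
   |b_{n+1} - b_n| <= (2C / d^eps) u_n, so the total climb of b on an excursion
   above d is at most 2C / d^eps times a tail of sum u_n.  Since these tails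
   vanish, b eventually cannot exceed 2d. *)

Lemma ratio_cvg1_near_le2 (R : realFieldType) (a at_ : R ^nat) :
  (forall n, 0 <= at_ n) -> (fun n => a n / at_ n) @ \oo --> (1 : R) ->
  \forall n \near \oo, at_ n <= 2 * a n.
Proof.
move=> at_ge0 /cvgrPdist_lt ratio_near.
have half_gt0 : 0 < 2^-1 :> R by rewrite invr_gt0.
apply: filterS (ratio_near _ half_gt0) => n; rewrite ltr_distl => /andP[lo hi].
have [at0|at_neq0] := eqVneq (at_ n) 0.
  by move: hi; rewrite at0 invr0 mulr0; lra.
have at_gt0 : 0 < at_ n by rewrite lt_def at_neq0 at_ge0.
rewrite -(divfK at_neq0 (a n)); move: lo hi; set r := a n / at_ n; nra.
Qed.

Lemma powR_sub_mul_le (R : realType) (d x p eps : R) :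
  0 <= eps -> 0 < d -> d <= x -> x `^ (p - eps) * d `^ eps <= x `^ p.
Proof.
move=> eps_ge0 d_gt0 dx; have x_gt0 := lt_le_trans d_gt0 dx.
have -> : x `^ p = x `^ (p - eps) * x `^ eps.
  by rewrite -powRD ?subrK // (gt_eqF x_gt0) implybT.
apply: ler_wpM2l; first exact: powR_ge0.
by apply: ge0_ler_powR => //; rewrite nnegrE; apply: ltW.
Qed.

Lemma telescope_ler_sum (R : numDomainType) (b w : R ^nat) (n k : nat) :
  (n <= k)%N -> (forall j, (n <= j < k)%N -> b j - b j.+1 <= w j) ->
  b n - b k <= \sum_(n <= j < k) w j.
Proof.
move=> nk step; rewrite -opprB -telescope_sumr // -sumrN big_nat_cond.
by rewrite [leRHS]big_nat_cond; apply: ler_sum => j /andP[/step]; rewrite opprB.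
Qed.

Lemma series_le_lim (R : realType) (u : R ^nat) :
  (forall n, 0 <= u n) -> cvgn (series u) -> forall n, series u n <= limn (series u).
Proof.
move=> u_ge0; apply: nondecreasing_cvgn_le => m n mn.
by rewrite -subr_ge0 sub_series_geq // sumr_ge0.
Qed.

Lemma series_tail_near_le (R : realType) (u : R ^nat) :
  (forall n, 0 <= u n) -> cvgn (series u) ->
  forall eta, 0 < eta -> \forall n \near \oo, forall k, series u k - series u n <= eta.
Proof.
move=> u_ge0 u_cvg eta eta_gt0; have le_lim := series_le_lim u_ge0 u_cvg.
move/cvgrPdist_lt : u_cvg => /(_ eta eta_gt0); apply: filterS => n.
by rewrite ltr_distl => /andP[_ hi] k; have := le_lim k; lra.
Qed.

Section excursions.
Variables (R : realType) (a b at_ : R ^nat) (C p eps : R).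
Hypotheses (a_ge0 : forall n, 0 <= a n) (b_ge0 : forall n, 0 <= b n).
Hypotheses (at_ge0 : forall n, 0 <= at_ n) (C_gt0 : 0 < C) (p_gt0 : 0 < p).
Hypothesis eps_ge0 : 0 <= eps.
Hypothesis a_div : series a @ \oo --> +oo.
Hypothesis u_cvg : cvgn (series (fun n => a n * b n `^ p)).
Hypothesis ratio_a : (fun n => a n / at_ n) @ \oo --> (1 : R).
Hypothesis step_b : forall n, `|b n.+1 - b n| <= C * at_ n * b n `^ (p - eps).

Let u n := a n * b n `^ p.

Let u_ge0 n : 0 <= u n. Proof. by rewrite mulr_ge0 ?powR_ge0. Qed.

Lemma b_frequently_le d : 0 < d -> forall n, exists2 k, (n <= k)%N & b k <= d.
Proof.
move=> d_gt0 n; apply/not_exists2P => b_gt /=.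
have {}b_gt k : (n <= k)%N -> d < b k.
  by move=> nk; case: (b_gt k) => // /negP; rewrite -ltNge.
have dp_gt0 : 0 < d `^ p by rewrite powR_gt0.
pose c := series a n + (limn (series u) - series u n) / d `^ p.
have sa_le m : (n <= m)%N -> series a m <= c.
  move=> nm; rewrite -lerBlDl ler_pdivlMr // sub_series_geq // mulr_suml.
  apply: le_trans (lerB (series_le_lim u_ge0 u_cvg m) (lexx _)).
  rewrite sub_series_geq // big_nat_cond [leRHS]big_nat_cond.
  apply: ler_sum => j /andP[/andP[nj _] _]; apply: ler_wpM2l => //.
  by apply: ge0_ler_powR; rewrite ?nnegrE ?b_ge0 ?ltW ?b_gt.
have /cvgryPge/(_ (c + 1))[M _ HM] := a_div.
have := sa_le (n + M)%N (leq_addr _ _); have := HM (n + M)%N (leq_addl _ _); lra.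
Qed.

Lemma b_first_le d : 0 < d -> forall n,
  exists k, [/\ (n <= k)%N, b k <= d & forall j, (n <= j < k)%N -> d < b j].
Proof.
move=> d_gt0 n; have [k0 nk0 bk0] := b_frequently_le d_gt0 n.
have : exists k, (n <= k)%N && (b k <= d) by exists k0; rewrite nk0 bk0.
case/ex_minnP => k /andP[nk bk] k_min; exists k; split => // j /andP[nj jk].
by rewrite ltNge; apply/negP => bj; have := k_min j; rewrite nj bj leqNgt jk => /(_ isT).
Qed.

Lemma b_excursion_le : \forall n \near \oo, forall d k, 0 < d -> (n <= k)%N ->
  (forall j, (n <= j < k)%N -> d < b j) ->
  b n - b k <= 2 * C / d `^ eps * (series u k - series u n).
Proof.
have [N _ at_le] := ratio_cvg1_near_le2 at_ge0 ratio_a.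
exists N => // n Nn d k d_gt0 nk b_gt; rewrite sub_series_geq // mulr_sumr.
apply: telescope_ler_sum => // j /[dup] /andP[nj _] /b_gt/ltW dj.
have de_gt0 : 0 < d `^ eps by rewrite powR_gt0.
apply: le_trans (ler_norm _) _; rewrite distrC; apply: le_trans (step_b j) _.
have := powR_sub_mul_le p eps_ge0 d_gt0 dj; rewrite -ler_pdivlMr // => bpe.
have := at_le j (leq_trans Nn nj) => /= at_j.
have -> : 2 * C / d `^ eps * u j = C * (2 * a j) * (b j `^ p / d `^ eps).
  by rewrite /u; field; rewrite gt_eqF.
apply: ler_pM => //; first by rewrite mulr_ge0 // ltW.
  exact: powR_ge0.
by rewrite ler_pM2l.
Qed.

End excursions.

Theorem lemma3p1 (R : realType) (a b at_ : R ^nat) (C p eps : R)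
  (ha : forall n, 0 <= a n) (hb : forall n, 0 <= b n) (hat : forall n, 0 <= at_ n)
  (hC : 0 < C) (hp : 0 < p) (heps0 : 0 <= eps) (hepsp : eps <= p)
  (hdiv : series a @ \oo --> +oo)
  (hconv : cvg (series (fun n => a n * b n `^ p) @ \oo))
  (hratio : (fun n => a n / at_ n) @ \oo --> (1 : R))
  (hstep : forall n, `|b n.+1 - b n| <= C * at_ n * b n `^ (p - eps)) :
  b @ \oo --> (0 : R).
Proof.
set u := fun n => a n * b n `^ p.
have u_ge0 n : 0 <= u n by rewrite mulr_ge0 ?powR_ge0.
apply/cvgrPdist_le => e e_gt0; set d := e / 2.
have d_gt0 : 0 < d by rewrite divr_gt0.
set K := 2 * C / d `^ eps.
have K_gt0 : 0 < K by rewrite divr_gt0 ?mulr_gt0 ?powR_gt0.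
have [N1 _ excursion] := b_excursion_le hat hC heps0 hratio hstep.
have [N2 _ tail] := series_tail_near_le u_ge0 hconv (divr_gt0 d_gt0 K_gt0).
exists (maxn N1 N2) => // n /= /[!geq_max] /andP[N1n N2n].
rewrite sub0r normrN ger0_norm // leNgt; apply/negP => bn_gt.
have [k [nk bk b_gt]] := b_first_le ha hb hp hdiv hconv d_gt0 n.
have := excursion n N1n d k d_gt0 nk b_gt; rewrite -/K.
have := tail n N2n k; rewrite ler_pdivlMr // mulrC.
have : e = 2 * d by rewrite /d; field.
lra.
Qed.
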